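(* Let $G=(V,E,\ell)$ be a finite node-labeled directed graph, let $\mathcal{L}:V\times V\to[0,1]$ satisfy $\mathcal{L}(u,v)=1$ if and only if $\ell(u)=\ell(v)$, and let $0<w^+<1$ (with $w^-=0$). Define $F^0=\mathcal{L}$ and, for $k\ge1$, $$F^k(u,v)=w^+A^k(N^+_G(u),N^+_G(v))+(1-w^+)\mathcal{L}(u,v),$$ where for $S_1,S_2\subseteq V$: $A^k(S_1,S_2)=1$ if $S_1=S_2=\emptyset$, and otherwise $$A^k(S_1,S_2)=\frac{1}{|S_1|+|S_2|}\Big(\sum_{x\in S_1}\max_{y\in S_2}F^{k-1}(x,y)+\sum_{y\in S_2}\max_{x\in S_1}F^{k-1}(x,y)\Big),$$ with the convention that a maximum over the empty set is $0$. Then for every integer $k\ge0$ and all $u,v\in V$: $u$ and $v$ are $k$-bisimilar if and only if $F^k(u,v)=1$.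
   Context: $N^+_G(u)=\{u':(u,u')\in E\}$ is the out-neighbor set of $u$. $k$-bisimilarity is defined recursively: $u$ and $v$ are $0$-bisimilar iff $\ell(u)=\ell(v)$; for $k>0$, $u$ and $v$ are $k$-bisimilar iff (1) $\ell(u)=\ell(v)$, (2) for every $u'\in N^+_G(u)$ there is $v'\in N^+_G(v)$ such that $u'$ and $v'$ are $(k-1)$-bisimilar, and (3) for every $v'\in N^+_G(v)$ there is $u'\in N^+_G(u)$ such that $u'$ and $v'$ are $(k-1)$-bisimilar. The iteration $F^k$ is the $k$-th iterate of the paper's fractional bisimulation score $\mathrm{FSim}_b$ with $w^-=0$ on a single graph. *)

From mathcomp Require Import all_boot all_order all_algebra.
Set Implicit Arguments. Unset Strict Implicit. Unset Printing Implicit Defensive.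
Import Order.TTheory GRing.Theory Num.Theory.
Local Open Scope ring_scope.

Section Defs.
Variables (V : finType) (L : eqType).
Variable (E : rel V) (lab : V -> L).

Definition outN (u : V) : {set V} := [set u' | E u u'].

Fixpoint kbisim (k : nat) (u v : V) : Prop :=
  match k with
  | 0 => lab u = lab v
  | k'.+1 => [/\ lab u = lab v,
      (forall u', u' \in outN u -> exists2 v', v' \in outN v & kbisim k' u' v')
    & (forall v', v' \in outN v -> exists2 u', u' \in outN u & kbisim k' u' v')]
  end.

Variable R : realFieldType.

Definition maxset (S : {set V}) (f : V -> R) : R :=
  match [pick y in S] with
  | None => 0
  | Some y0 => \big[Num.max/f y0]_(y in S) f y
  end.

Definition Aagg (F : V -> V -> R) (S1 S2 : {set V}) : R :=
  if (S1 == set0) && (S2 == set0) then 1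
  else ((#|S1| + #|S2|)%:R)^-1 *
       (\sum_(x in S1) maxset S2 (fun y => F x y)
        + \sum_(y in S2) maxset S1 (fun x => F x y)).

Fixpoint Fk (wp : R) (Lsim : V -> V -> R) (k : nat) (u v : V) : R :=
  match k with
  | 0 => Lsim u v
  | k'.+1 => wp * Aagg (Fk wp Lsim k') (outN u) (outN v) + (1 - wp) * Lsim u v
  end.
End Defs.

From Pilot Require Import Defs.
From mathcomp Require Import all_boot all_order all_algebra.
From mathcomp Require Import ring lra.
Import Order.TTheory GRing.Theory Num.Theory.
Local Open Scope ring_scope.
Set Implicit Arguments. Unset Strict Implicit.

(* All scores F^k take values in [0, 1], and a score reaches the value 1
   exactly when each of its ingredients does:
   - a maximum over a set equals 1 iff some element of the set scores 1;
   - a sum of |S| terms bounded by 1 equals |S| iff every term equals 1;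
   - hence A(S1, S2) = 1 iff the relation "F x y = 1" matches every element
     of S1 with some element of S2 and vice versa (the "back-and-forth" lift
     of that relation to S1, S2);
   - a proper convex combination w a + (1 - w) b of a, b <= 1 equals 1 iff
     a = b = 1.
   Since (k+1)-bisimilarity is precisely "same label and back-and-forth lift
   of k-bisimilarity to the out-neighbourhoods", the theorem follows by
   induction on k, with F^0 = Lsim handled by the hypothesis on Lsim. *)

Definition lift_rel {V : finType} (P : V -> V -> Prop) (S1 S2 : {set V}) :=
  (forall x, x \in S1 -> exists2 y, y \in S2 & P x y) /\
  (forall y, y \in S2 -> exists2 x, x \in S1 & P x y).

Lemma lift_rel_iff {V : finType} (P Q : V -> V -> Prop) (S1 S2 : {set V}) :
  (forall x y, P x y <-> Q x y) -> lift_rel P S1 S2 <-> lift_rel Q S1 S2.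
Proof.
move=> PQ; split=> -[to from]; split.
- by move=> x /to [y Sy /PQ]; exists y.
- by move=> y /from [x Sx /PQ]; exists x.
- by move=> x /to [y Sy /PQ]; exists y.
- by move=> y /from [x Sx /PQ]; exists x.
Qed.

Lemma kbisimS (V : finType) (L : eqType) (E : rel V) (lab : V -> L) k u v :
  kbisim E lab k.+1 u v <->
  lab u = lab v /\ lift_rel (kbisim E lab k) (outN E u) (outN E v).
Proof. by split=> [[? ? ?]|[? [? ?]]]. Qed.

Section MaxOverSet.
Variables (R : realFieldType) (V : finType).
Implicit Types (S : {set V}) (f : V -> R).

Lemma maxset_attained S f :
  S != set0 -> exists2 y, y \in S & Defs.maxset S f = f y.
Proof.
rewrite /Defs.maxset; case: pickP => [y0 Sy0 _|S0]; last first.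
  by case/set0Pn=> y; rewrite S0.
apply: (big_ind (fun m => exists2 y, y \in S & m = f y)) => //.
- by exists y0.
- by move=> _ _ [y1 S1 ->] [y2 S2 ->]; rewrite maxEle; case: ifP; eauto.
- by move=> y Sy; exists y.
Qed.

Lemma maxset_unit S f :
  (forall y, y \in S -> 0 <= f y <= 1) -> 0 <= Defs.maxset S f <= 1.
Proof.
have [->|S0] := eqVneq S set0.
  by rewrite /Defs.maxset; case: pickP => [y|_]; rewrite ?inE // lexx ler01.
by have [y Sy ->] := maxset_attained f S0; apply.
Qed.

Lemma maxset_ge S f y : y \in S -> f y <= Defs.maxset S f.
Proof.
rewrite /Defs.maxset; case: pickP => [y0 _|S0] Sy; first exact: le_bigmax_cond.
by rewrite S0 in Sy.
Qed.

Lemma maxset_eq1 S f :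
  (forall y, y \in S -> f y <= 1) ->
  Defs.maxset S f = 1 <-> exists2 y, y \in S & f y = 1.
Proof.
move=> f_le1; have [->|S0] := eqVneq S set0.
  rewrite /Defs.maxset; case: pickP => [y|_]; rewrite ?inE //.
  by split=> [/esym/eqP|[y]]; rewrite ?oner_eq0 ?inE.
have [y Sy max_y] := maxset_attained f S0.
split=> [max1|[z Sz fz1]]; first by exists y; rewrite // -max_y.
apply/eqP; rewrite eq_le max_y f_le1 //= -fz1 -max_y; exact: maxset_ge.
Qed.
End MaxOverSet.

Section SumsOfScores.
Variables (R : realFieldType) (V : finType).

Lemma sum_le_card (S : {set V}) (g : V -> R) :
  (forall x, x \in S -> g x <= 1) -> \sum_(x in S) g x <= #|S|%:R.
Proof. by move=> g_le1; rewrite -sum1_card natr_sum; apply: ler_sum. Qed.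

Lemma sum_eq_card (S : {set V}) (g : V -> R) :
  (forall x, x \in S -> g x <= 1) ->
  \sum_(x in S) g x = #|S|%:R <-> (forall x, x \in S -> g x = 1).
Proof.
move=> g_le1; rewrite -sum1_card natr_sum; split; last first.
  by move=> g1; apply: eq_bigr.
move=> sum_eq x Sx; apply/eqP; rewrite eq_sym -subr_eq0; apply/eqP.
have gap_ge0 i : i \in S -> 0 <= 1 - g i by move/g_le1; rewrite subr_ge0.
apply: (psumr_eq0P gap_ge0) => //.
by rewrite sumrB sum_eq subrr.
Qed.
End SumsOfScores.

Lemma mean_eq1 (R : realFieldType) (a b m n : R) :
  0 < m + n -> a <= m -> b <= n -> (m + n)^-1 * (a + b) = 1 <-> a = m /\ b = n.
Proof.
move=> mn_gt0 am bn; split=> [|[-> ->]]; last by rewrite mulVf ?gt_eqF.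
move/(congr1 ( *%R (m + n))); rewrite mulrA mulfV ?gt_eqF // mul1r mulr1.
by move=> ab; split; lra.
Qed.

Section Aggregation.
Variables (R : realFieldType) (V : finType) (F : V -> V -> R).
Hypothesis F_unit : forall x y, 0 <= F x y <= 1.
Variables (S1 S2 : {set V}).

Let best_to x : R := Defs.maxset S2 (fun y => F x y).
Let best_from y : R := Defs.maxset S1 (fun x => F x y).

Let best_to_unit x : 0 <= best_to x <= 1.
Proof. by apply: maxset_unit => y _; apply: F_unit. Qed.

Let best_from_unit y : 0 <= best_from y <= 1.
Proof. by apply: maxset_unit => x _; apply: F_unit. Qed.

Let F_le1 x y : F x y <= 1. Proof. by case/andP: (F_unit x y). Qed.
Let best_to_le1 x : x \in S1 -> best_to x <= 1.
Proof. by case/andP: (best_to_unit x). Qed.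
Let best_from_le1 y : y \in S2 -> best_from y <= 1.
Proof. by case/andP: (best_from_unit y). Qed.

Let sums_bounded :
  0 <= \sum_(x in S1) best_to x <= #|S1|%:R /\
  0 <= \sum_(y in S2) best_from y <= #|S2|%:R.
Proof.
split; apply/andP; split.
- by apply: sumr_ge0 => x _; case/andP: (best_to_unit x).
- exact: sum_le_card.
- by apply: sumr_ge0 => y _; case/andP: (best_from_unit y).
- exact: sum_le_card.
Qed.

Let card_pos : ~~ ((S1 == set0) && (S2 == set0)) -> 0 < (#|S1| + #|S2|)%:R :> R.
Proof.
move=> nonempty; rewrite ltr0n addn_gt0 !card_gt0.
by apply: contraR nonempty; rewrite negb_or !negbK.
Qed.

Lemma Aagg_unit : 0 <= Aagg F S1 S2 <= 1.
Proof.
rewrite /Aagg; case: ifPn => [_|/card_pos]; first by rewrite ler01 lexx.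
have [/andP[a0 a1] /andP[b0 b1]] := sums_bounded.
rewrite natrD => n_gt0; apply/andP; split.
  by apply: mulr_ge0; [rewrite invr_ge0 ltW | exact: addr_ge0].
by rewrite ler_pdivrMl // mulr1; exact: lerD.
Qed.

Lemma Aagg_eq1 : Aagg F S1 S2 = 1 <-> lift_rel (fun x y => F x y = 1) S1 S2.
Proof.
rewrite /Aagg; case: ifPn => [/andP[/eqP-> /eqP->]|/card_pos n_gt0].
  by split=> // _; split=> x; rewrite inE.
have [/andP[_ a1] /andP[_ b1]] := sums_bounded.
rewrite natrD in n_gt0 *; rewrite mean_eq1 //.
rewrite (sum_eq_card best_to_le1) (sum_eq_card best_from_le1).
split=> -[to from]; split.
- by move=> x /to /(maxset_eq1 (fun y _ => F_le1 x y)).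
- by move=> y /from /(maxset_eq1 (fun x _ => F_le1 x y)).
- by move=> x /to ?; apply/(maxset_eq1 (fun y _ => F_le1 x y)).
- by move=> y /from ?; apply/(maxset_eq1 (fun x _ => F_le1 x y)).
Qed.
End Aggregation.

Lemma convex_eq1 (R : realFieldType) (w a b : R) :
  0 < w < 1 -> a <= 1 -> b <= 1 -> w * a + (1 - w) * b = 1 <-> a = 1 /\ b = 1.
Proof.
move=> /andP[w0 w1] a1 b1; split=> [comb1|[-> ->]]; last by ring.
by split; nra.
Qed.

Lemma Fk_unit (R : realFieldType) (V : finType) (E : rel V)
    (Lsim : V -> V -> R) (wp : R) :
  (forall u v, 0 <= Lsim u v <= 1) -> 0 < wp < 1 ->
  forall k u v, 0 <= Fk E wp Lsim k u v <= 1.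
Proof.
move=> L_unit /andP[w0 w1]; elim=> [|k IH] u v /=; first exact: L_unit.
have /andP[A0 A1] := Aagg_unit IH (outN E u) (outN E v).
have /andP[L0 L1] := L_unit u v.
apply/andP; split; nra.
Qed.

Theorem theorem4 (R : realFieldType) (V : finType) (L : eqType)
  (E : rel V) (lab : V -> L) (Lsim : V -> V -> R) (wp : R) :
  (forall u v, 0 <= Lsim u v <= 1) ->
  (forall u v, Lsim u v = 1 <-> lab u = lab v) ->
  0 < wp < 1 ->
  forall (k : nat) (u v : V),
    kbisim E lab k u v <-> Fk E wp Lsim k u v = 1.
Proof.
move=> L_unit L_eq1 wp_in; have F_unit := Fk_unit E L_unit wp_in.
elim=> [|k IH] u v; first by rewrite L_eq1.
have /andP[_ A1] := Aagg_unit (F_unit k) (outN E u) (outN E v).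
have /andP[_ L1] := L_unit u v.
rewrite kbisimS /= convex_eq1 // Aagg_eq1 // L_eq1 (lift_rel_iff _ _ IH).
by split=> -[].
Qed.
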